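(* Consider Algorithm iR2N (described in the context) and suppose (A1), (A2), (A3), (A4), (A6), (A7) hold. Let $\epsilon>0$, $k_\epsilon=\min\{k\in\mathbb{N}\mid \nu_k^{-1}\|\hat s_{k,\mathrm{cp}}\|<\epsilon\}$, $\mathcal{S}(\epsilon)=\{k\in\mathbb{N}\mid\hat\rho_k\ge\hat\eta_1,\ k<k_\epsilon\}$ and $\mathcal{U}(\epsilon)=\{k\in\mathbb{N}\mid\hat\rho_k<\hat\eta_1,\ k<k_\epsilon\}$. Then $$|\mathcal{S}(\epsilon)|+|\mathcal{U}(\epsilon)|\le\big(1+|\log_{\gamma_1}(\gamma_3)|\big)\,\omega_s\,\epsilon^{-2}+\log_{\gamma_1}(\sigma_{\max}/\sigma_0)=O(\epsilon^{-2}),$$ where $\omega_s=\dfrac{(f+h)(x_0)-(f+h)_{\mathrm{low}}}{\tfrac12\eta_1(1-\theta_1)\nu_{\min}}$. In particular $k_\epsilon=|\mathcal{S}(\epsilon)|+|\mathcal{U}(\epsilon)|+1$ is finite.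
   Context: Setting. $f:\mathbb{R}^n\to\mathbb{R}$ is continuously differentiable, $h:\mathbb{R}^n\to\mathbb{R}\cup\{+\infty\}$ is proper and lower semicontinuous; the problem is $\min_x f(x)+h(x)$. $\|\cdot\|$ is the Euclidean norm (spectral norm for matrices). For each $x$, approximations $\hat f(x)\in\mathbb{R}$ of $f(x)$ and $\hat\nabla f(x)\in\mathbb{R}^n$ of $\nabla f(x)$ are available. For each $x$, $\psi(\cdot;x):\mathbb{R}^n\to\mathbb{R}\cup\{+\infty\}$ is proper, lsc, satisfies $\psi(0;x)=h(x)$ and $\partial\psi(0;x)\subseteq\partial h(x)$ ($\partial$ = limiting subdifferential), and is uniformly prox-bounded: there is $\lambda>0$ such that for every $x$ and every $0<\lambda'<\lambda$, $w\mapsto\psi(w;x)+\tfrac{1}{2\lambda'}\|w\|^2$ is bounded below. Models: $\varphi_{\mathrm{cp}}(s;x)=\hat f(x)+\hat\nabla f(x)^Ts$; $m_{\mathrm{cp}}(s;x,\nu^{-1})=\varphi_{\mathrm{cp}}(s;x)+\tfrac12\nu^{-1}\|s\|^2+\psi(s;x)$; for a symmetric $B(x)\in\mathbb{R}^{n\times n}$, $\varphi(s;x)=\hat f(x)+\hat\nabla f(x)^Ts+\tfrac12 s^TB(x)s$ and $m(s;x,\sigma)=\varphi(s;x)+\tfrac12\sigma\|s\|^2+\psi(s;x)$. Algorithm iR2N. Constants: $\kappa_f,\kappa_\nabla>0$, $0<\gamma_3\le 1<\gamma_1\le\gamma_2$, $0<\hat\eta_1\le\hat\eta_2<1$, $0<\theta_1<1<\theta_2$,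 $\sigma_{\min}>4\kappa_f\theta_1\theta_2^2/(\hat\eta_1(1-\theta_1))$, $\sigma_0\ge\sigma_{\min}$, $x_0\in\mathbb{R}^n$. At iteration $k=0,1,\dots$: choose symmetric $B_k=B(x_k)$; set $\nu_k=\theta_1/(\|B_k\|+\sigma_k)$; compute $\hat s_{k,\mathrm{cp}}$ with $m_{\mathrm{cp}}(\hat s_{k,\mathrm{cp}};x_k,\nu_k^{-1})\le m_{\mathrm{cp}}(0;x_k,\nu_k^{-1})$ (an approximate minimizer of $m_{\mathrm{cp}}(\cdot;x_k,\nu_k^{-1})$ obtained by a descent procedure from $s=0$) and set $\hat\xi_{k,\mathrm{cp}}=(\varphi_{\mathrm{cp}}+\psi)(0;x_k)-(\varphi_{\mathrm{cp}}+\psi)(\hat s_{k,\mathrm{cp}};x_k)$; compute $s_k$ with $m(s_k;x_k,\sigma_k)\le m(\hat s_{k,\mathrm{cp}};x_k,\sigma_k)$; if $\|s_k\|>\theta_2\|\hat s_{k,\mathrm{cp}}\|$, reset $s_k=\hat s_{k,\mathrm{cp}}$ (these computations are repeated with refined $\hat f,\hat\nabla f$ until (A6) holds). Compute $$\hat\rho_k=\frac{\hat f(x_k)+h(x_k)-\hat f(x_k+s_k)-h(x_k+s_k)}{\varphi(0;x_k)+\psi(0;x_k)-\varphi(s_k;x_k)-\psi(s_k;x_k)},$$ where $\varphi(\cdot;x_k)$ uses $B_k$. If $\hat\rho_k\ge\hat\eta_1$ (successful) set $x_{k+1}=x_k+s_k$, else $x_{k+1}=x_k$. Choose $\sigma_{k+1}\in[\gamma_3\sigma_k,\sigma_k]$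 if $\hat\rho_k\ge\hat\eta_2$ (very successful), $\sigma_{k+1}\in[\sigma_k,\gamma_1\sigma_k]$ if $\hat\eta_1\le\hat\rho_k<\hat\eta_2$, $\sigma_{k+1}\in[\gamma_1\sigma_k,\gamma_2\sigma_k]$ if $\hat\rho_k<\hat\eta_1$; then reset $\sigma_{k+1}=\max(\sigma_{k+1},\sigma_{\min})$. Assumptions. (A1) $|f(x+s)-f(x)-\nabla f(x)^Ts|\le\tfrac12L\|s\|^2$ for all $x,s$, for some $L\ge0$. (A2) $\|B_k\|\le\kappa_B$ for all $k$, for some $\kappa_B>0$. (A3) $|\psi(s;x)-h(x+s)|\le\kappa_h\|s\|^2$ for all $x,s$, for some $\kappa_h>0$. (A4) For all $k$, $\varphi(0;x_k)+\psi(0;x_k)-(\varphi(s_k;x_k)+\psi(s_k;x_k))\ge(1-\theta_1)\hat\xi_{k,\mathrm{cp}}$. (A6) For all $k$: $|f(x_k)-\hat f(x_k)|\le\kappa_f\|s_k\|^2$, $|f(x_k+s_k)-\hat f(x_k+s_k)|\le\kappa_f\|s_k\|^2$, $\|\nabla f(x_k)-\hat\nabla f(x_k)\|\le\kappa_\nabla\|s_k\|$. (A7) There is $(f+h)_{\mathrm{low}}\in\mathbb{R}$ with $(f+h)(x)\ge(f+h)_{\mathrm{low}}$ for all $x$. Constants: $\eta_1=\hat\eta_1-4\kappa_f\theta_1\theta_2^2/((1-\theta_1)\sigma_{\min})$; $\sigma_{\mathrm{succ}}=\max\big(\theta_1\theta_2^2(L+\kappa_B+2\kappa_h+4\kappa_f+2\kappa_\nabla)/((1-\theta_1)(1-\hat\eta_2)),\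 \lambda^{-1}\big)$; $\sigma_{\max}=\max(\sigma_0,\gamma_2\sigma_{\mathrm{succ}})$ (an upper bound on all $\sigma_k$); $\nu_{\min}=\theta_1/(\kappa_B+\sigma_{\max})$. *)

From HB Require Import structures.
From mathcomp Require Import all_boot all_order all_algebra.
From mathcomp Require Import all_classical all_reals all_analysis.
Set Implicit Arguments. Unset Strict Implicit. Unset Printing Implicit Defensive.
Import Order.TTheory GRing.Theory Num.Theory.
Local Open Scope ring_scope.

Section IR2N_defs.
Variables (R : realType) (n : nat).
Local Notation vec := 'rV[R]_n.

Definition dot (u v : vec) : R := (u *m v^T) 0 0.
Definition enorm (v : vec) : R := Num.sqrt (dot v v).

Definition quad (B : 'M[R]_n) (s : vec) : R := (s *m B *m s^T) 0 0.

Definition spnorm (B : 'M[R]_n) : R :=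
  sup [set r : R | exists v : vec, enorm v <= 1 /\ r = enorm (v *m B)].

Definition has_gradient (f : vec -> R) (g : vec -> vec) : Prop :=
  forall x e, 0 < e -> exists d, 0 < d /\
    forall s, enorm s < d -> `|f (x + s) - f x - dot (g x) s| <= e * enorm s.

Definition vcontinuous (g : vec -> vec) : Prop :=
  forall x e, 0 < e -> exists d, 0 < d /\
    forall y, enorm (y - x) < d -> enorm (g y - g x) < e.

Definition proper_fun (h : vec -> \bar R) : Prop :=
  (forall x, h x != -oo%E) /\ exists x, h x \is a fin_num.

Definition lsc (h : vec -> \bar R) : Prop :=
  forall x (a : R), (a%:E < h x)%E -> exists d, 0 < d /\
    forall y, enorm (y - x) < d -> (a%:E < h y)%E.

Definition regular_subgrad (h : vec -> \bar R) (x v : vec) : Prop :=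
  h x \is a fin_num /\
  forall e, 0 < e -> exists d, 0 < d /\ forall y, enorm (y - x) < d ->
    ((fine (h x) + dot v (y - x) - e * enorm (y - x))%:E <= h y)%E.

Definition limiting_subgrad (h : vec -> \bar R) (x v : vec) : Prop :=
  h x \is a fin_num /\
  exists (xs vs : nat -> vec),
    (forall j, regular_subgrad h (xs j) (vs j)) /\
    (forall e, 0 < e -> exists N : nat, forall j : nat, (N <= j)%N ->
       [/\ enorm (xs j - x) < e, enorm (vs j - v) < e
         & `|fine (h (xs j)) - fine (h x)| < e]).

(* uniform prox-boundedness of psi(.;x) (psi x w stands for psi(w;x)) *)
Definition unif_prox_bounded (psi : vec -> vec -> \bar R) (lam : R) : Prop :=
  0 < lam /\ forall x lam', 0 < lam' -> lam' < lam ->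
    exists c : R, forall w, (c%:E <= psi x w + (enorm w ^+ 2 / (2 * lam'))%:E)%E.

Definition phi_cp (fx : R) (g s : vec) : R := fx + dot g s.
Definition phi_q (fx : R) (g : vec) (B : 'M[R]_n) (s : vec) : R :=
  fx + dot g s + quad B s / 2.
Definition m_cp (fx : R) (g : vec) (psix : vec -> \bar R) (nuinv : R) (s : vec)
  : \bar R := ((phi_cp fx g s + nuinv / 2 * enorm s ^+ 2)%:E + psix s)%E.
Definition m_q (fx : R) (g : vec) (B : 'M[R]_n) (psix : vec -> \bar R) (sig : R)
  (s : vec) : \bar R := ((phi_q fx g B s + sig / 2 * enorm s ^+ 2)%:E + psix s)%E.

End IR2N_defs.

From HB Require Import structures.
From mathcomp Require Import all_boot all_order all_algebra.
From mathcomp Require Import all_classical all_reals all_analysis.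
From mathcomp Require Import ring lra.
Import Order.TTheory GRing.Theory Num.Theory.
Set Implicit Arguments. Unset Strict Implicit. Unset Printing Implicit Defensive.
Local Open Scope ring_scope.

(* Before the criticality measure drops below eps, the Cauchy-point decrease and (A4)
   bound the predicted decrease from below by a multiple of nu_k^-1 |s_cp|^2, hence of
   nu_k eps^2, while (A1)-(A3) and (A6) bound |ared - pred| by a multiple of |s_k|^2 <=
   th2^2 |s_cp|^2.  Consequently an iteration with sigma_k >= sigma_succ is very
   successful, so sigma_k never exceeds sigma_max and nu_k >= nu_min; and every
   successful iteration decreases f + h by at least eta1 (1 - th1) nu_min eps^2 / 2,
   the inexactness of f being absorbed because sigma_k >= sigma_min.  Telescoping
   against (A7) bounds the number of successful iterations by omega eps^-2.  Since an
   unsuccessful iteration multiplies sigma by at least g1 and a successful one by at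
   least g3, comparing logarithms with sigma_N <= sigma_max bounds the unsuccessful
   ones.  Were eps never reached, these bounds would hold for every N although the
   two counts add up to N. *)

Lemma sum_mul_sqr_le (R : realFieldType) (I : finType) (a b : I -> R) :
  (\sum_i a i * b i) ^+ 2 <= (\sum_i a i ^+ 2) * (\sum_i b i ^+ 2).
Proof.
have lagrange : 2 * ((\sum_i a i ^+ 2) * (\sum_i b i ^+ 2) - (\sum_i a i * b i) ^+ 2)
    = \sum_i \sum_j (a i * b j - a j * b i) ^+ 2.
  have expand i j : (a i * b j - a j * b i) ^+ 2
      = a i ^+ 2 * b j ^+ 2 + b i ^+ 2 * a j ^+ 2 - 2 * (a i * b i) * (a j * b j).
    by ring.
  under [RHS]eq_bigr => i _ do under eq_bigr => j _ do rewrite expand.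
  under [RHS]eq_bigr => i _ do rewrite sumrB big_split /= -!mulr_sumr.
  by rewrite sumrB big_split /= -!mulr_suml -mulr_sumr expr2; ring.
have : 0 <= \sum_i \sum_j (a i * b j - a j * b i) ^+ 2.
  by apply: sumr_ge0 => i _; apply: sumr_ge0 => j _; exact: sqr_ge0.
by rewrite -lagrange pmulr_rge0 // subr_ge0.
Qed.

Section EuclideanSpace.
Variables (R : realType) (n : nat).
Implicit Types (u v w : 'rV[R]_n) (A : 'M[R]_n).

Lemma dotE u v : dot u v = \sum_i u 0 i * v 0 i.
Proof. by rewrite /dot !mxE; apply: eq_bigr => i _; rewrite mxE. Qed.

Lemma dot_ge0 u : 0 <= dot u u.
Proof. by rewrite dotE; apply: sumr_ge0 => i _; rewrite -expr2 sqr_ge0. Qed.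

Lemma dotr0 u : dot u 0 = 0.
Proof. by rewrite /dot trmx0 mulmx0 mxE. Qed.

Lemma quad0 A : quad A 0 = 0.
Proof. by rewrite /quad !mul0mx mxE. Qed.

Lemma dotBl u v w : dot (u - v) w = dot u w - dot v w.
Proof. by rewrite /dot mulmxBl !mxE. Qed.

Lemma enorm_ge0 u : 0 <= enorm u.
Proof. exact: sqrtr_ge0. Qed.

Lemma enorm0 : enorm (0 : 'rV[R]_n) = 0.
Proof. by rewrite /enorm dotr0 sqrtr0. Qed.

Lemma enormZ (c : R) u : enorm (c *: u) = `|c| * enorm u.
Proof.
have : dot (c *: u) (c *: u) = c ^+ 2 * dot u u.
  by rewrite !dotE mulr_sumr; apply: eq_bigr => i _; rewrite !mxE; ring.
by rewrite /enorm => ->; rewrite sqrtrM ?sqr_ge0 // sqrtr_sqr.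
Qed.

Lemma dot_le_enorm u v : `|dot u v| <= enorm u * enorm v.
Proof.
rewrite /enorm -sqrtrM ?dot_ge0 // -(sqrtr_sqr (dot u v)) ler_sqrt; last first.
  by rewrite mulr_ge0 ?dot_ge0.
by rewrite !dotE; exact: (sum_mul_sqr_le (fun i => u 0 i) (fun i => v 0 i)).
Qed.

(* The Frobenius norm only serves to show that the set defining [spnorm] is bounded. *)
Definition frobenius A : R := Num.sqrt (\sum_i \sum_j A i j ^+ 2).

Lemma enorm_mulmx_le_frobenius u A : enorm (u *m A) <= frobenius A * enorm u.
Proof.
have frob_ge0 : 0 <= \sum_i \sum_j A i j ^+ 2.
  by apply: sumr_ge0 => i _; apply: sumr_ge0 => j _; exact: sqr_ge0.
rewrite /enorm /frobenius -sqrtrM // ler_sqrt ?mulr_ge0 ?dot_ge0 //.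
rewrite dotE exchange_big mulr_suml; apply: ler_sum => j _.
rewrite dotE [leRHS]mulrC !mxE.
exact: (sum_mul_sqr_le (fun i => u 0 i) (fun i => A i j)).
Qed.

Let spnorm_has_sup A :
  has_sup [set r : R | exists v : 'rV[R]_n, enorm v <= 1 /\ r = enorm (v *m A)].
Proof.
split; first by exists 0, 0; rewrite enorm0 mul0mx enorm0.
exists (frobenius A) => _ [v [v1 ->]].
apply: le_trans (enorm_mulmx_le_frobenius v A) _.
by rewrite ler_piMr ?sqrtr_ge0.
Qed.

Lemma spnorm_ge0 A : 0 <= spnorm A.
Proof.
by apply: (sup_upper_bound (spnorm_has_sup A)); exists 0; rewrite enorm0 mul0mx enorm0.
Qed.

Lemma enorm_mulmx_le u A : enorm (u *m A) <= spnorm A * enorm u.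
Proof.
have [u0|u_neq0] := eqVneq (enorm u) 0.
  apply: le_trans (enorm_mulmx_le_frobenius u A) _.
  by rewrite u0 !mulr0.
have u_gt0 : 0 < enorm u by rewrite lt_def u_neq0 enorm_ge0.
have : enorm (((enorm u)^-1 *: u) *m A) <= spnorm A.
  apply: (sup_upper_bound (spnorm_has_sup A)); exists ((enorm u)^-1 *: u); split=> //.
  by rewrite enormZ gtr0_norm ?invr_gt0 // mulVf.
by rewrite -scalemxAl enormZ gtr0_norm ?invr_gt0 // ler_pdivrMl // mulrC.
Qed.

Lemma quad_le u A : `|quad A u| <= spnorm A * enorm u ^+ 2.
Proof.
apply: le_trans (dot_le_enorm (u *m A) u) _.
by rewrite expr2 mulrA ler_wpM2r ?enorm_ge0 ?enorm_mulmx_le.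
Qed.

Lemma m_cp_decrease (fx : R) (g : 'rV[R]_n) (psix : 'rV[R]_n -> \bar R) (nuinv : R) s :
  psix 0 \is a fin_num -> psix s \is a fin_num ->
  (m_cp fx g psix nuinv s <= m_cp fx g psix nuinv 0)%E ->
  nuinv / 2 * enorm s ^+ 2
    <= (phi_cp fx g 0 + fine (psix 0)) - (phi_cp fx g s + fine (psix s)).
Proof.
move=> /fineK psi0E /fineK psisE; rewrite /m_cp -psi0E -psisE -!EFinD lee_fin.
by rewrite /phi_cp dotr0 enorm0 expr0n /= mulr0; lra.
Qed.

End EuclideanSpace.

Lemma fin_num_leD_EFin (R : numDomainType) (a b : R) (y z : \bar R) :
  (a%:E + y <= b%:E + z)%E -> z \is a fin_num -> y != -oo%E -> y \is a fin_num.
Proof. by case: y => [r| |] //; case: z. Qed.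

Lemma card_ord_set_sum (P : pred nat) N :
  #|[set k : 'I_N | P k]| = (\sum_(k < N) P k)%N.
Proof.
by rewrite -sum1_card big_mkcond; apply: eq_bigr => k _; rewrite inE; case: (P k).
Qed.

Lemma card_ord_setC (P : pred nat) N :
  (#|[set k : 'I_N | P k]| + #|[set k : 'I_N | ~~ P k]|)%N = N.
Proof.
rewrite -[RHS]card_ord -(cardsC [set k : 'I_N | P k]); congr (_ + _)%N.
by apply: eq_card => k; rewrite !inE.
Qed.

Section IterationCounts.
Variable R : realFieldType.
Implicit Types (P : pred nat) (N : nat).

Lemma telescope_card_le (F : nat -> R) P (c : R) N :
  (forall k, (k < N)%N -> P k -> F k.+1 + c <= F k) ->
  (forall k, (k < N)%N -> ~~ P k -> F k.+1 = F k) ->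
  F N + c * #|[set k : 'I_N | P k]|%:R <= F 0.
Proof.
elim: N => [|N IH] decr stay; first by rewrite card_ord_set_sum big_ord0 mulr0 addr0.
have {}IH := IH (fun k kN => decr k (ltnW kN)) (fun k kN => stay k (ltnW kN)).
rewrite card_ord_set_sum big_ord_recr /= -card_ord_set_sum natrD mulrDr addrA.
case PN: (P N).
  by have := decr N (ltnSn N) PN; rewrite mulr1; lra.
by rewrite mulr0 addr0 stay ?PN.
Qed.

Lemma card_growth_le (sigma : nat -> R) P (g1 g3 : R) N :
  0 <= g1 -> 0 <= g3 ->
  (forall k, (k < N)%N -> P k -> g3 * sigma k <= sigma k.+1) ->
  (forall k, (k < N)%N -> ~~ P k -> g1 * sigma k <= sigma k.+1) ->
  g1 ^+ #|[set k : 'I_N | ~~ P k]| * g3 ^+ #|[set k : 'I_N | P k]| * sigma 0 <= sigma N.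
Proof.
move=> g1_ge0 g3_ge0; elim: N => [|N IH] up3 up1.
  by rewrite !card_ord_set_sum (card_ord_set_sum (predC P)) !big_ord0 !expr0 !mul1r.
have {}IH := IH (fun k kN => up3 k (ltnW kN)) (fun k kN => up1 k (ltnW kN)).
rewrite (card_ord_set_sum P) (card_ord_set_sum (predC P)) !big_ord_recr /=.
rewrite -(card_ord_set_sum P) -(card_ord_set_sum (predC P)).
case PN: (P N) => /=; rewrite addn0 ?addn1 exprS.
  apply: le_trans (up3 N (ltnSn N) PN).
  by rewrite mulrCA -!mulrA ler_wpM2l // mulrA.
apply: le_trans (up1 N (ltnSn N) (negbT PN)).
by rewrite -!mulrA ler_wpM2l // !mulrA.
Qed.

Lemma add_le_of_weighted_le (s u a b l1 l3 : R) :
  0 < l1 -> l3 <= 0 -> s <= a -> u * l1 + s * l3 <= b ->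
  s + u <= (1 + `|l3 / l1|) * a + b / l1.
Proof.
move=> l1_gt0 l3_le0 s_le u_le.
have r_le0 : l3 / l1 <= 0 by rewrite mulr_le0_ge0 // invr_ge0 ltW.
have u_le' : u <= b / l1 - s * (l3 / l1).
  by rewrite mulrA -mulrBl ler_pdivlMr //; lra.
rewrite ler0_norm //.
have : (1 - l3 / l1) * s <= (1 - l3 / l1) * a by rewrite ler_wpM2l // subr_ge0 (le_trans r_le0).
lra.
Qed.

Lemma le_max_threshold (sigma : nat -> R) (smin g2 ssucc : R) N :
  0 <= g2 -> smin <= sigma 0 ->
  (forall k, (k < N)%N -> sigma k.+1 <= Num.max (g2 * sigma k) smin) ->
  (forall k, (k < N)%N -> ssucc <= sigma k -> sigma k.+1 <= Num.max (sigma k) smin) ->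
  forall k, (k <= N)%N -> sigma k <= Num.max (sigma 0) (g2 * ssucc).
Proof.
move=> g2_ge0 smin_le grow stall; set smax := Num.max _ _.
have smin_smax : smin <= smax by rewrite le_max smin_le.
elim=> [|k IH] kN; first by rewrite le_max lexx.
have {}IH := IH (ltnW kN).
have [ss|ss] := leP ssucc (sigma k).
  by apply: le_trans (stall k kN ss) _; rewrite ge_max IH.
apply: le_trans (grow k kN) _; rewrite ge_max smin_smax andbT.
by apply: le_trans (_ : g2 * ssucc <= smax); rewrite ?le_max ?lexx ?orbT // ler_wpM2l // ltW.
Qed.

End IterationCounts.

Section IR2N.
Variables (R : realType) (n : nat).
Variables (f : 'rV[R]_n -> R) (gradf : 'rV[R]_n -> 'rV[R]_n) (h : 'rV[R]_n -> \bar R)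
  (psi : 'rV[R]_n -> 'rV[R]_n -> \bar R) (lam : R).
Variables (kf kg g1 g2 g3 eh1 eh2 th1 th2 smin s0 : R) (x0 : 'rV[R]_n).
Variables (L kB kh flow : R).
Variables (x : nat -> 'rV[R]_n) (sigma : nat -> R) (B : nat -> 'M[R]_n)
  (fhat : nat -> 'rV[R]_n -> R) (ghat : nat -> 'rV[R]_n -> 'rV[R]_n)
  (scp scand s : nat -> 'rV[R]_n) (eps : R).

Let nu k := th1 / (spnorm (B k) + sigma k).
Let phik k w := phi_q (fhat k (x k)) (ghat k (x k)) (B k) w.
Let phicpk k w := phi_cp (fhat k (x k)) (ghat k (x k)) w.
Let xicp k :=
  (phicpk k 0 + fine (psi (x k) 0)) - (phicpk k (scp k) + fine (psi (x k) (scp k))).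
Let pred k := phik k 0 + fine (psi (x k) 0) - phik k (s k) - fine (psi (x k) (s k)).
Let ared k := fhat k (x k) + fine (h (x k)) - fhat k (x k + s k) - fine (h (x k + s k)).
Let rho k := ared k / pred k.
Let F k := f (x k) + fine (h (x k)).
Let crit k := (nu k)^-1 * enorm (scp k) < eps.
Let eta1 := eh1 - 4 * kf * th1 * th2 ^+ 2 / ((1 - th1) * smin).
Let ssucc := Num.max (th1 * th2 ^+ 2 * (L + kB + 2 * kh + 4 * kf + 2 * kg)
                        / ((1 - th1) * (1 - eh2))) lam^-1.
Let smax := Num.max s0 (g2 * ssucc).
Let numin := th1 / (kB + smax).
Let omega := (f x0 + fine (h x0) - flow) / (1 / 2 * eta1 * (1 - th1) * numin).

Hypothesis psi_neq_ninfty : forall y w, psi y w != -oo%E.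
Hypothesis psi0 : forall y, psi y 0 = h y.
Hypotheses (kf_gt0 : 0 < kf) (kg_gt0 : 0 < kg).
Hypotheses (g3_gt0 : 0 < g3) (g3_le1 : g3 <= 1) (g1_gt1 : 1 < g1) (g1_le_g2 : g1 <= g2).
Hypotheses (eh1_gt0 : 0 < eh1) (eh1_le_eh2 : eh1 <= eh2) (eh2_lt1 : eh2 < 1).
Hypotheses (th1_gt0 : 0 < th1) (th1_lt1 : th1 < 1) (th2_gt1 : 1 < th2).
Hypothesis smin_gt : 4 * kf * th1 * th2 ^+ 2 / (eh1 * (1 - th1)) < smin.
Hypothesis smin_le_s0 : smin <= s0.
Hypothesis hx0_fin : h x0 \is a fin_num.
Hypothesis eps_gt0 : 0 < eps.
Hypotheses (x_0 : x 0 = x0) (sigma_0 : sigma 0 = s0).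
Hypothesis scp_decrease : forall k,
  (m_cp (fhat k (x k)) (ghat k (x k)) (psi (x k)) (nu k)^-1 (scp k)
    <= m_cp (fhat k (x k)) (ghat k (x k)) (psi (x k)) (nu k)^-1 0)%E.
Hypothesis scand_decrease : forall k,
  (m_q (fhat k (x k)) (ghat k (x k)) (B k) (psi (x k)) (sigma k) (scand k)
    <= m_q (fhat k (x k)) (ghat k (x k)) (B k) (psi (x k)) (sigma k) (scp k))%E.
Hypothesis s_def : forall k,
  s k = if th2 * enorm (scp k) < enorm (scand k) then scp k else scand k.
Hypothesis x_succ : forall k, x k.+1 = if eh1 <= rho k then x k + s k else x k.
Hypothesis sigma_succ : forall k, exists sp : R,
  [/\ eh2 <= rho k -> g3 * sigma k <= sp <= sigma k,
      eh1 <= rho k < eh2 -> sigma k <= sp <= g1 * sigma k,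
      rho k < eh1 -> g1 * sigma k <= sp <= g2 * sigma k
    & sigma k.+1 = Num.max sp smin].
Hypothesis L_ge0 : 0 <= L.
Hypothesis f_taylor : forall y w,
  `|f (y + w) - f y - dot (gradf y) w| <= L / 2 * enorm w ^+ 2.
Hypotheses (kB_gt0 : 0 < kB) (B_bounded : forall k, spnorm (B k) <= kB).
Hypothesis kh_gt0 : 0 < kh.
Hypothesis psi_model : forall y w,
  (psi y w \is a fin_num <-> h (y + w) \is a fin_num) /\
  `|fine (psi y w) - fine (h (y + w))| <= kh * enorm w ^+ 2.
Hypothesis pred_ge_xicp : forall k,
  (phik k 0 + fine (psi (x k) 0)) - (phik k (s k) + fine (psi (x k) (s k)))
    >= (1 - th1) * xicp k.
Hypothesis inexact : forall k,
  [/\ `|f (x k) - fhat k (x k)| <= kf * enorm (s k) ^+ 2,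
      `|f (x k + s k) - fhat k (x k + s k)| <= kf * enorm (s k) ^+ 2
    & enorm (gradf (x k) - ghat k (x k)) <= kg * enorm (s k)].
Hypothesis fh_ge_flow : forall y, (flow%:E <= (f y)%:E + h y)%E.

Let th1_lt1' : 0 < 1 - th1. Proof. by rewrite subr_gt0. Qed.

Let th2_gt0 : 0 < th2. Proof. exact: lt_trans ltr01 th2_gt1. Qed.

Let smin_gt0 : 0 < smin.
Proof.
apply: le_lt_trans smin_gt; rewrite divr_ge0 ?mulr_ge0 ?sqr_ge0 ?ltW //.
Qed.

Lemma sigma_ge_smin k : smin <= sigma k.
Proof.
case: k => [|k]; first by rewrite sigma_0.
by have [sp [_ _ _ ->]] := sigma_succ k; rewrite le_max lexx orbT.
Qed.

Let sigma_gt0 k : 0 < sigma k. Proof. exact: lt_le_trans (sigma_ge_smin k). Qed.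

Let nu_gt0 k : 0 < nu k.
Proof. by rewrite divr_gt0 // ltr_wpDl ?spnorm_ge0. Qed.

Lemma sigma_le_nu_inv k : sigma k / th1 <= (nu k)^-1.
Proof. by rewrite invf_div ler_pM2r ?invr_gt0 // lerDr spnorm_ge0. Qed.

Lemma h_fin k : h (x k) \is a fin_num.
Proof.
elim: k => [|k IH]; first by rewrite x_0.
rewrite x_succ; case: ifP => // _; apply/(psi_model (x k) (s k)).1.
have psi0_fin : psi (x k) 0 \is a fin_num by rewrite psi0.
have scp_fin : psi (x k) (scp k) \is a fin_num.
  exact: fin_num_leD_EFin (scp_decrease k) psi0_fin (psi_neq_ninfty _ _).
by rewrite s_def; case: ifP => // _;
  exact: fin_num_leD_EFin (scand_decrease k) scp_fin (psi_neq_ninfty _ _).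
Qed.

Lemma xicp_ge k : (nu k)^-1 / 2 * enorm (scp k) ^+ 2 <= xicp k.
Proof.
have psi0_fin : psi (x k) 0 \is a fin_num by rewrite psi0 h_fin.
apply: m_cp_decrease (scp_decrease k) => //.
exact: fin_num_leD_EFin (scp_decrease k) psi0_fin (psi_neq_ninfty _ _).
Qed.

Lemma step_sqr_le k : enorm (s k) ^+ 2 <= th2 ^+ 2 * enorm (scp k) ^+ 2.
Proof.
have th2_scp_ge0 : 0 <= th2 * enorm (scp k) by rewrite mulr_ge0 ?enorm_ge0 ?ltW.
rewrite -exprMn ler_sqr ?nnegrE ?enorm_ge0 // s_def.
by case: ltP => // _; rewrite ler_peMl ?enorm_ge0 ?ltW.
Qed.

Lemma pred_ge k : (1 - th1) * ((nu k)^-1 / 2 * enorm (scp k) ^+ 2) <= pred k.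
Proof.
apply: le_trans (_ : (1 - th1) * xicp k <= pred k).
  by rewrite ler_wpM2l ?xicp_ge // ltW.
by have := pred_ge_xicp k; rewrite /pred; lra.
Qed.

(* Both thresholds come from this estimate: [sigma k >= ssucc] makes the factor small
   against [1 - eh2], and [sigma k >= smin] makes it small against [eh1]. *)
Lemma step_sqr_le_pred k :
  enorm (s k) ^+ 2 <= 2 * th1 * th2 ^+ 2 / ((1 - th1) * sigma k) * pred k.
Proof.
apply: le_trans (step_sqr_le k) _.
set c := (1 - th1) * (sigma k / th1 / 2).
have c_gt0 : 0 < c by rewrite !mulr_gt0 ?invr_gt0.
have pred_ge_c : enorm (scp k) ^+ 2 * c <= pred k.
  apply: le_trans (pred_ge k); rewrite /c mulrC -!mulrA ler_wpM2l ?(ltW th1_lt1') //.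
  by rewrite mulrA ler_wpM2r ?sigma_le_nu_inv // mulr_ge0 ?sqr_ge0.
have -> : 2 * th1 * th2 ^+ 2 / ((1 - th1) * sigma k) * pred k = th2 ^+ 2 * (pred k / c).
  by rewrite /c; field; rewrite !gt_eqF.
by rewrite ler_wpM2l ?sqr_ge0 // ler_pdivlMr.
Qed.

Lemma pred_ge_eps k : ~ crit k -> (1 - th1) / 2 * nu k * eps ^+ 2 <= pred k.
Proof.
move=> /negP; rewrite -leNgt => eps_le; apply: le_trans (pred_ge k).
have -> : (1 - th1) * ((nu k)^-1 / 2 * enorm (scp k) ^+ 2)
    = (1 - th1) / 2 * nu k * ((nu k)^-1 * enorm (scp k)) ^+ 2.
  by field; rewrite gt_eqF.
have coef_ge0 : 0 <= (1 - th1) / 2 * nu k :=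
  mulr_ge0 (divr_ge0 (ltW th1_lt1') (ler0n _ 2)) (ltW (nu_gt0 k)).
rewrite ler_wpM2l // ler_sqr ?nnegrE ?(ltW eps_gt0) //.
by rewrite (le_trans (ltW eps_gt0)).
Qed.

Lemma pred_gt0 k : ~ crit k -> 0 < pred k.
Proof.
move/pred_ge_eps; apply: lt_le_trans.
by rewrite mulr_gt0 ?exprn_gt0 // mulr_gt0 ?nu_gt0 // divr_gt0.
Qed.

Lemma ared_pred_le k : `|ared k - pred k|
  <= (L + kB + 2 * kh + 4 * kf + 2 * kg) / 2 * enorm (s k) ^+ 2.
Proof.
have [f_err fs_err g_err] := inexact k.
have g_term : `|dot (gradf (x k) - ghat k (x k)) (s k)| <= kg * enorm (s k) ^+ 2.
  apply: le_trans (dot_le_enorm _ _) _.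
  by rewrite expr2 mulrA ler_wpM2r ?enorm_ge0.
have B_term : `|quad (B k) (s k)| <= kB * enorm (s k) ^+ 2.
  by apply: le_trans (quad_le _ _) _; rewrite ler_wpM2r ?sqr_ge0.
move: f_err fs_err g_term B_term (f_taylor (x k) (s k)) (psi_model (x k) (s k)).2.
rewrite /ared /pred /phik /phi_q dotr0 dotBl quad0 psi0 !ler_norml.
move=> /andP[? ?] /andP[? ?] /andP[? ?] /andP[? ?] /andP[? ?] /andP[? ?].
by apply/andP; split; lra.
Qed.

Lemma very_successful k : ~ crit k -> ssucc <= sigma k -> eh2 <= rho k.
Proof.
move=> not_crit ssucc_le; have pred_pos := pred_gt0 not_crit.
set C := L + kB + 2 * kh + 4 * kf + 2 * kg.
have C_ge0 : 0 <= C by move: L_ge0 kB_gt0 kh_gt0 kf_gt0 kg_gt0; rewrite /C; lra.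
have C_le : th1 * th2 ^+ 2 * C <= sigma k * ((1 - th1) * (1 - eh2)).
  rewrite -ler_pdivrMr ?mulr_gt0 ?subr_gt0 //.
  by apply: le_trans ssucc_le; rewrite le_max lexx.
have err_le : C / 2 * enorm (s k) ^+ 2 <= (1 - eh2) * pred k.
  apply: le_trans (_ : C / 2 * (2 * th1 * th2 ^+ 2 / ((1 - th1) * sigma k) * pred k) <= _).
    by rewrite ler_wpM2l ?step_sqr_le_pred ?divr_ge0.
  rewrite mulrA ler_wpM2r ?(ltW pred_pos) //.
  have -> : C / 2 * (2 * th1 * th2 ^+ 2 / ((1 - th1) * sigma k))
      = th1 * th2 ^+ 2 * C / ((1 - th1) * sigma k).
    by field; rewrite !gt_eqF.
  rewrite ler_pdivrMr ?mulr_gt0 //; apply: le_trans C_le _.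
  by rewrite mulrC mulrA [(1 - th1) * _]mulrC.
have := ared_pred_le k; rewrite -/C ler_norml => /andP[err _].
by rewrite /rho /= ler_pdivlMr //; lra.
Qed.

Lemma sigma_update k :
  [/\ sigma k.+1 <= Num.max (g2 * sigma k) smin,
      eh2 <= rho k -> sigma k.+1 <= Num.max (sigma k) smin,
      eh1 <= rho k -> g3 * sigma k <= sigma k.+1
    & ~~ (eh1 <= rho k) -> g1 * sigma k <= sigma k.+1].
Proof.
have [sp [very succ unsucc ->]] := sigma_succ k.
have sigma_ge0 := ltW (sigma_gt0 k).
have g1_ge0 : 0 <= g1 := le_trans ler01 (ltW g1_gt1).
have le_g1 : sigma k <= g1 * sigma k by rewrite ler_peMl // ltW.
have g1_le : g1 * sigma k <= g2 * sigma k by rewrite ler_wpM2r.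
have g3_le : g3 * sigma k <= sigma k by rewrite ler_piMl // ltW.
have [sp_le very_le succ_ge unsucc_ge] : [/\ sp <= g2 * sigma k,
    eh2 <= rho k -> sp <= sigma k, eh1 <= rho k -> g3 * sigma k <= sp
  & ~~ (eh1 <= rho k) -> g1 * sigma k <= sp].
  have [r2|r2] := leP eh2 (rho k).
    have /andP[lo hi] := very r2; have r1 := le_trans eh1_le_eh2 r2.
    split=> [|_|_|]; [exact: le_trans hi (le_trans le_g1 g1_le) | exact: hi | exact: lo |].
    by rewrite r1.
  have [r1|r1] := leP eh1 (rho k).
    have /andP[lo hi] : sigma k <= sp <= g1 * sigma k by apply: succ; rewrite r1.
    split=> // [|_]; [exact: le_trans hi g1_le | exact: le_trans g3_le lo].
  have /andP[lo hi] := unsucc r1.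
  by split=> //.
split=> [|/very_le le_sigma|/succ_ge ge_sp|/unsucc_ge ge_sp].
- exact: le_max2 sp_le (lexx smin).
- exact: le_max2 le_sigma (lexx smin).
- by rewrite le_max ge_sp.
- by rewrite le_max ge_sp.
Qed.

Lemma sigma_le_smax N :
  (forall j, (j < N)%N -> ~ crit j) -> forall k, (k <= N)%N -> sigma k <= smax.
Proof.
move=> not_crit k kN; rewrite /smax -sigma_0.
apply: (le_max_threshold (smin := smin)) kN.
- exact: le_trans (le_trans ler01 (ltW g1_gt1)) g1_le_g2.
- by rewrite sigma_0.
- by move=> j _; have [] := sigma_update j.
- move=> j jN ssucc_le; have [_ very _ _] := sigma_update j.
  exact: very (very_successful (not_crit j jN) ssucc_le).
Qed.

Lemma nu_ge_numin k : sigma k <= smax -> numin <= nu k.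
Proof.
move=> sigma_le.
have denom_le : spnorm (B k) + sigma k <= kB + smax by rewrite lerD ?B_bounded.
have denom_gt0 : 0 < spnorm (B k) + sigma k by rewrite ltr_wpDl ?spnorm_ge0.
rewrite ler_wpM2l ?(ltW th1_gt0) // lef_pV2 ?posrE //.
exact: lt_le_trans denom_le.
Qed.
Let eta1_gt0 : 0 < eta1.
Proof.
rewrite subr_gt0 ltr_pdivrMr ?mulr_gt0 //.
have -> : eh1 * ((1 - th1) * smin) = smin * (eh1 * (1 - th1)) by ring.
by rewrite -ltr_pdivrMr ?mulr_gt0.
Qed.

Let numin_gt0 : 0 < numin.
Proof.
by rewrite divr_gt0 // addr_gt0 // (lt_le_trans (sigma_gt0 0)) // sigma_0 le_max lexx.
Qed.

Lemma successful_decrease k : ~ crit k -> sigma k <= smax -> eh1 <= rho k ->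
  F k.+1 + 1 / 2 * eta1 * (1 - th1) * numin * eps ^+ 2 <= F k.
Proof.
move=> not_crit sigma_le succ; have pred_pos := pred_gt0 not_crit.
set de := 4 * kf * th1 * th2 ^+ 2 / ((1 - th1) * smin).
have ared_ge : eh1 * pred k <= ared k by move: succ; rewrite /rho /= ler_pdivlMr.
have inexact_le : 2 * kf * enorm (s k) ^+ 2 <= de * pred k.
  apply: le_trans (_ : 2 * kf * (2 * th1 * th2 ^+ 2 / ((1 - th1) * sigma k) * pred k) <= _).
    by rewrite ler_wpM2l ?step_sqr_le_pred // mulr_ge0 // ltW.
  rewrite mulrA ler_wpM2r ?(ltW pred_pos) //.
  have -> : 2 * kf * (2 * th1 * th2 ^+ 2 / ((1 - th1) * sigma k))
      = 4 * kf * th1 * th2 ^+ 2 / ((1 - th1) * sigma k) by ring.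
  rewrite ler_wpM2l ?mulr_ge0 ?(ltW kf_gt0) ?(ltW th1_gt0) ?(ltW th2_gt0) //.
  by rewrite lef_pV2 ?posrE ?mulr_gt0 // ler_wpM2l ?(ltW th1_lt1') ?sigma_ge_smin.
have pred_ge_numin : (1 - th1) / 2 * numin * eps ^+ 2 <= pred k.
  apply: le_trans (pred_ge_eps not_crit); rewrite ler_wpM2r ?sqr_ge0 //.
  by rewrite ler_wpM2l ?nu_ge_numin // divr_ge0 // ltW.
have eta1_pred : eta1 * ((1 - th1) / 2 * numin * eps ^+ 2) <= eh1 * pred k - de * pred k.
  by rewrite -mulrBl ler_wpM2l ?(ltW eta1_gt0).
have [f_err fs_err _] := inexact k.
move: f_err fs_err ared_ge inexact_le eta1_pred.
rewrite /F /= (x_succ k) succ /ared !ler_norml => /andP[? ?] /andP[? ?] ? ? ?.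
lra.
Qed.

Lemma iteration_count_le N : (forall j, (j < N)%N -> ~ crit j) ->
  #|[set k : 'I_N | eh1 <= rho k]|%:R + #|[set k : 'I_N | ~~ (eh1 <= rho k)]|%:R
    <= (1 + `|ln g3 / ln g1|) * omega * eps ^-2 + ln (smax / s0) / ln g1.
Proof.
move=> not_crit; have sigma_le := sigma_le_smax not_crit.
set c := 1 / 2 * eta1 * (1 - th1) * numin.
have g1_gt0 : 0 < g1 := lt_trans ltr01 g1_gt1.
have s0_gt0 : 0 < s0 by rewrite -sigma_0.
rewrite -mulrA; apply: add_le_of_weighted_le; [exact: ln_gt0 | exact: ln_le0 | |].
- have decr k : (k < N)%N -> eh1 <= rho k -> F k.+1 + c * eps ^+ 2 <= F k.
    by move=> kN; exact: successful_decrease (not_crit k kN) (sigma_le k (ltnW kN)).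
  have stay k : (k < N)%N -> ~~ (eh1 <= rho k) -> F k.+1 = F k.
    by move=> _ /negbTE fail; rewrite /F /= x_succ fail.
  have flow_le : flow <= F N.
    by have := fh_ge_flow (x N); rewrite -(fineK (h_fin N)) -EFinD lee_fin.
  have := telescope_card_le decr stay.
  have -> : omega / eps ^+ 2 = (F 0 - flow) / (c * eps ^+ 2).
    by rewrite /omega /F /= x_0 -mulrA -invfM.
  have c_gt0 : 0 < c.
    apply: mulr_gt0 numin_gt0; apply: mulr_gt0 th1_lt1'.
    exact: mulr_gt0 (divr_gt0 ltr01 (ltr0Sn _ 1)) eta1_gt0.
  rewrite ler_pdivlMr; last exact: mulr_gt0 c_gt0 (exprn_gt0 _ eps_gt0).
  by move: flow_le; lra.
- have up3 k : (k < N)%N -> eh1 <= rho k -> g3 * sigma k <= sigma k.+1.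
    by move=> _; have [] := sigma_update k.
  have up1 k : (k < N)%N -> ~~ (eh1 <= rho k) -> g1 * sigma k <= sigma k.+1.
    by move=> _; have [] := sigma_update k.
  have := card_growth_le (ltW g1_gt0) (ltW g3_gt0) up3 up1.
  rewrite sigma_0; set u := #|_|; set v := #|_| => growth.
  have smax_gt0 : 0 < smax by rewrite (lt_le_trans s0_gt0) // le_max lexx.
  have g1u_gt0 : 0 < g1 ^+ u := exprn_gt0 _ g1_gt0.
  have g3v_gt0 : 0 < g3 ^+ v := exprn_gt0 _ g3_gt0.
  have : ln (g1 ^+ u * g3 ^+ v * s0) <= ln smax.
    by rewrite ler_ln ?posrE ?mulr_gt0 // (le_trans growth) ?sigma_le.
  rewrite !lnM ?posrE ?mulr_gt0 ?invr_gt0 // lnV ?posrE // !lnXn // !mulr_natl.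
  by rewrite lerBrDr.
Qed.

Lemma crit_reached : exists k, crit k.
Proof.
case: (pselect (exists k, crit k)) => // never.
pose b := (1 + `|ln g3 / ln g1|) * omega * eps ^-2 + ln (smax / s0) / ln g1.
have := @iteration_count_le (Num.truncn b).+1 (fun j _ crit_j => never (ex_intro _ j crit_j)).
rewrite -natrD (card_ord_setC (fun k => eh1 <= rho k)) => le_b.
by have := lt_le_trans (truncnS_gt b) le_b; rewrite ltxx.
Qed.

Lemma iR2N_complexity : (exists k, crit k) /\
  forall keps : nat, crit keps -> (forall j, (j < keps)%N -> ~ crit j) ->
    (#|[set k : 'I_keps | eh1 <= rho k]|%:R + #|[set k : 'I_keps | rho k < eh1]|%:R : R)
    <= (1 + `|ln g3 / ln g1|) * omega * eps ^-2 + ln (smax / s0) / ln g1.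
Proof.
split=> [|keps _ before]; first exact: crit_reached.
have -> : [set k : 'I_keps | rho k < eh1] = [set k : 'I_keps | ~~ (eh1 <= rho k)].
  by apply/setP => k; rewrite !inE ltNge.
exact: iteration_count_le.
Qed.

End IR2N.

Theorem theorem3p7
  (R : realType) (n : nat)
  (f : 'rV[R]_n -> R) (gradf : 'rV[R]_n -> 'rV[R]_n)
  (h : 'rV[R]_n -> \bar R)
  (psi : 'rV[R]_n -> 'rV[R]_n -> \bar R)   (* psi x w = psi(w; x) *)
  (lam : R)
  (kf kg g1 g2 g3 eh1 eh2 th1 th2 smin s0 : R) (x0 : 'rV[R]_n)
  (L kB kh flow : R)
  (x : nat -> 'rV[R]_n) (sigma : nat -> R) (B : nat -> 'M[R]_n)
  (fhat : nat -> 'rV[R]_n -> R) (ghat : nat -> 'rV[R]_n -> 'rV[R]_n)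
  (scp scand s : nat -> 'rV[R]_n)
  (eps : R) :
  has_gradient f gradf -> vcontinuous gradf ->
  proper_fun h -> lsc h ->
  (forall y, proper_fun (psi y)) -> (forall y, lsc (psi y)) ->
  (forall y, psi y 0 = h y) ->
  (forall y v, limiting_subgrad (psi y) 0 v -> limiting_subgrad h y v) ->
  unif_prox_bounded psi lam ->
  0 < kf -> 0 < kg ->
  0 < g3 -> g3 <= 1 -> 1 < g1 -> g1 <= g2 ->
  0 < eh1 -> eh1 <= eh2 -> eh2 < 1 ->
  0 < th1 -> th1 < 1 -> 1 < th2 ->
  4 * kf * th1 * th2 ^+ 2 / (eh1 * (1 - th1)) < smin ->
  smin <= s0 ->
  (* x0 lies in the domain of h, so that (f+h)(x0) is a real number *)
  h x0 \is a fin_num ->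
  0 < eps ->
  let nu := fun k => th1 / (spnorm (B k) + sigma k) in
  let phik := fun k (w : 'rV[R]_n) => phi_q (fhat k (x k)) (ghat k (x k)) (B k) w in
  let phicpk := fun k (w : 'rV[R]_n) => phi_cp (fhat k (x k)) (ghat k (x k)) w in
  let xicp := fun k =>
    (phicpk k 0 + fine (psi (x k) 0)) - (phicpk k (scp k) + fine (psi (x k) (scp k))) in
  let rho := fun k =>
    (fhat k (x k) + fine (h (x k)) - fhat k (x k + s k) - fine (h (x k + s k))) /
    (phik k 0 + fine (psi (x k) 0) - phik k (s k) - fine (psi (x k) (s k))) in
  x 0 = x0 -> sigma 0 = s0 ->
  (forall k, (B k)^T = B k) ->
  (forall k, (m_cp (fhat k (x k)) (ghat k (x k)) (psi (x k)) (nu k)^-1 (scp k)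
              <= m_cp (fhat k (x k)) (ghat k (x k)) (psi (x k)) (nu k)^-1 0)%E) ->
  (forall k, (m_q (fhat k (x k)) (ghat k (x k)) (B k) (psi (x k)) (sigma k) (scand k)
              <= m_q (fhat k (x k)) (ghat k (x k)) (B k) (psi (x k)) (sigma k) (scp k))%E) ->
  (forall k, s k = if th2 * enorm (scp k) < enorm (scand k) then scp k else scand k) ->
  (forall k, x k.+1 = if eh1 <= rho k then x k + s k else x k) ->
  (forall k, exists sp : R,
     [/\ eh2 <= rho k -> g3 * sigma k <= sp <= sigma k,
         eh1 <= rho k < eh2 -> sigma k <= sp <= g1 * sigma k,
         rho k < eh1 -> g1 * sigma k <= sp <= g2 * sigma k
       & sigma k.+1 = Num.max sp smin]) ->
  (* (A1) *)
  0 <= L ->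
  (forall y w, `|f (y + w) - f y - dot (gradf y) w| <= L / 2 * enorm w ^+ 2) ->
  (* (A2) *)
  0 < kB -> (forall k, spnorm (B k) <= kB) ->
  (* (A3) *)
  0 < kh ->
  (forall y w, (psi y w \is a fin_num <-> h (y + w) \is a fin_num) /\
               `|fine (psi y w) - fine (h (y + w))| <= kh * enorm w ^+ 2) ->
  (* (A4) *)
  (forall k, (phik k 0 + fine (psi (x k) 0)) - (phik k (s k) + fine (psi (x k) (s k)))
             >= (1 - th1) * xicp k) ->
  (* (A6) *)
  (forall k, [/\ `|f (x k) - fhat k (x k)| <= kf * enorm (s k) ^+ 2,
                 `|f (x k + s k) - fhat k (x k + s k)| <= kf * enorm (s k) ^+ 2
               & enorm (gradf (x k) - ghat k (x k)) <= kg * enorm (s k)]) ->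
  (* (A7) *)
  (forall y, (flow%:E <= (f y)%:E + h y)%E) ->
  let eta1 := eh1 - 4 * kf * th1 * th2 ^+ 2 / ((1 - th1) * smin) in
  let ssucc := Num.max (th1 * th2 ^+ 2 * (L + kB + 2 * kh + 4 * kf + 2 * kg)
                          / ((1 - th1) * (1 - eh2))) lam^-1 in
  let smax := Num.max s0 (g2 * ssucc) in
  let numin := th1 / (kB + smax) in
  let omega := (f x0 + fine (h x0) - flow) / (1 / 2 * eta1 * (1 - th1) * numin) in
  let crit := fun k => (nu k)^-1 * enorm (scp k) < eps in
  (exists k, crit k) /\
  forall keps : nat, crit keps -> (forall j, (j < keps)%N -> ~ crit j) ->
    (#|[set k : 'I_keps | eh1 <= rho k]|%:R
       + #|[set k : 'I_keps | rho k < eh1]|%:R : R)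
    <= (1 + `|ln g3 / ln g1|) * omega * eps ^-2 + ln (smax / s0) / ln g1.
Proof.
move=> _ _ _ _ psi_proper _ psi0 _ _ kf_gt0 kg_gt0 g3_gt0 g3_le1 g1_gt1 g1_le_g2
  eh1_gt0 eh1_le_eh2 eh2_lt1 th1_gt0 th1_lt1 th2_gt1 smin_gt smin_le_s0 hx0_fin eps_gt0
  nu phik phicpk xicp rho x_0 sigma_0 _ scp_decrease scand_decrease s_def x_succ
  sigma_succ L_ge0 f_taylor kB_gt0 B_bounded kh_gt0 psi_model pred_ge_xicp inexact
  fh_ge_flow eta1 ssucc smax numin omega crit.
have psi_neq_ninfty y w : psi y w != -oo%E by have [] := psi_proper y.
exact: (iR2N_complexity lam psi_neq_ninfty psi0 kf_gt0 kg_gt0 g3_gt0 g3_le1 g1_gt1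
  g1_le_g2 eh1_gt0 eh1_le_eh2 eh2_lt1 th1_gt0 th1_lt1 th2_gt1 smin_gt smin_le_s0 hx0_fin
  eps_gt0 x_0 sigma_0 scp_decrease scand_decrease s_def x_succ sigma_succ L_ge0 f_taylor
  kB_gt0 B_bounded kh_gt0 psi_model pred_ge_xicp inexact fh_ge_flow).
Qed.
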